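(* Let $X$ be a Banach space and $f_k:X\to\mathbb{R}\cup\{+\infty\}$ $(k\in\mathbb{N})$ proper convex functions such that $f:=\sup_{k\in\mathbb{N}}f_k$ is proper. Let $f_\infty(x):=\limsup_{k\to\infty}f_k(x)$ $(x\in X)$. Then $$\inf_{x\in X} f(x)=\max\Big\{\inf_{x\in X}\Big(\overline{\sum_{k\in\mathbb{N}}}\lambda_kf_k(x)+\lambda_\infty f_\infty(x)\Big):\ (\lambda_1,\lambda_2,\ldots)\in\ell^1_+,\ \lambda_\infty\ge0,\ \sum_{k=1}^{\infty}\lambda_k+\lambda_\infty=1\Big\},$$ in particular the maximum is attained.
   Context: $\ell^1_+$ is the set of sequences in $\ell^1$ with nonnegative entries. For $x\in X$, $\overline{\sum_{k\in\mathbb{N}}}\lambda_kf_k(x):=\limsup_{n\to\infty}\sum_{k=1}^n\lambda_kf_k(x)$. Conventions: $0\cdot(+\infty)=+\infty$ and $(+\infty)-(+\infty)=+\infty$. *)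

From HB Require Import structures.
From mathcomp Require Import all_boot all_order all_algebra.
From mathcomp Require Import all_classical all_reals all_analysis.
Set Implicit Arguments. Unset Strict Implicit. Unset Printing Implicit Defensive.
Import Order.TTheory GRing.Theory Num.Theory.
Import numFieldNormedType.Exports.
Local Open Scope classical_set_scope.
Local Open Scope ring_scope.
Local Open Scope ereal_scope.

(* Multiplication of a nonnegative real scalar by an extended real, with the
   paper's convention 0 * (+oo) = +oo (otherwise the usual product). *)
Definition cmul {R : realType} (l : R) (a : \bar R) : \bar R :=
  if a == +oo then +oo else l%:E * a.

(* Addition with the paper's convention (+oo) + (-oo) = +oo. *)
Definition cadd {R : realType} (a b : \bar R) : \bar R :=
  if (a == +oo) || (b == +oo) then +oo else a + b.

Definition proper_fun {R : realType} {X : Type} (f : X -> \bar R) : Prop :=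
  (forall x, f x != -oo) /\ (exists x, f x != +oo).

Definition convex_fun {R : realType} {X : lmodType R} (f : X -> \bar R) : Prop :=
  forall (x y : X) (t : R), (0 < t < 1)%R ->
    f (t *: x + (1 - t) *: y)%R <= t%:E * f x + (1 - t)%:E * f y.

Definition admissible {R : realType} (l : nat -> R) (linf : R) : Prop :=
  (forall k, 0 <= l k)%R /\ cvgn (series l) /\ (0 <= linf)%R /\
  (limn (series l) + linf = 1)%R.

Definition weighted_value {R : realType} {X : Type} (f : nat -> X -> \bar R)
  (l : nat -> R) (linf : R) (x : X) : \bar R :=
  cadd (limn_esup (fun n => \sum_(0 <= k < n) cmul (l k) (f k x)))
       (cmul linf (limn_esup (fun k => f k x))).

From Pilot Require Import Defs.
From HB Require Import structures.
From mathcomp Require Import all_boot all_order all_algebra.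
From mathcomp Require Import all_classical all_reals all_analysis.
From mathcomp Require Import ring lra.
Import Order.TTheory GRing.Theory Num.Theory.
Import numFieldNormedType.Exports.
Local Open Scope classical_set_scope.
Local Open Scope ring_scope.

(* For admissible weights the upper weighted sum of the f_k(x) never exceeds sup_k f_k(x), so
   every infimum on the right is at most inf f.  For the converse let a := inf f (the case
   a = -oo is trivial) and work on the convex set C where f is finite.  There
   g_n := sup_(k >= n) f_k satisfies g_n = max (f_n, g_(n+1)), and a one-dimensional minimax
   lemma (if a <= max (u, v) on C for convex u, v, then a <= t u + (1 - t) v on C for a single
   t in [0, 1]) splits off f_n at each step.  This yields weights lam_k >= 0 with
   a <= sum_(k<n) lam_k f_k + (1 - sum_(k<n) lam_k) g_n on C for every n.  Since g_n decreases
   to f_infty, letting n -> oo gives a <= the weighted value with lam_infty := 1 - sum_k lam_k;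
   off C that value is +oo. *)

Lemma convex_set_mem {R : realType} {X : lmodType R} {C : set X} {x y : X} {t : R} :
  convex_set C -> C x -> C y -> 0 < t < 1 -> C (t *: x + (1 - t) *: y).
Proof.
move=> convC Cx Cy /andP[t0 t1].
by have := convC x y (Itv01 (ltW t0) (ltW t1)) (mem_set Cx) (mem_set Cy); rewrite inE.
Qed.

Definition convex_on {R : realType} {X : lmodType R} (C : set X) (u : X -> R) :=
  forall x y (t : R), C x -> C y -> 0 < t < 1 ->
    u (t *: x + (1 - t) *: y) <= t * u x + (1 - t) * u y.

Section TwoConvexFunctions.
Variables (R : realType) (X : lmodType R) (C : set X) (u v : X -> R) (a : R).
Hypotheses (convC : convex_set C) (convu : convex_on C u) (convv : convex_on C v).
Hypothesis a_le_max : forall x, C x -> a <= Num.max (u x) (v x).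

Let a_le_u y : C y -> v y < a -> a <= u y.
Proof.
by move=> Cy vya; have := a_le_max y Cy; rewrite le_max (leNgt a (v y)) vya orbF.
Qed.

Let a_le_v x : C x -> u x < a -> a <= v x.
Proof. by move=> Cx uxa; have := a_le_max x Cx; rewrite le_max leNgt uxa. Qed.

Lemma max_convex_cross x y : C x -> C y -> u x < a -> v y < a ->
  (a - u x) * (a - v y) <= (v x - a) * (u y - a).
Proof.
move=> Cx Cy uxa vya.
have := a_le_v x Cx uxa; have := a_le_u y Cy vya => auy avx.
rewrite leNgt; apply/negP => cross.
(* Otherwise the combination of [x] and [y] with weight [mu] puts both [u] and [v] below [a]. *)
set S := (a - u x) + (v x - a) + (a - v y) + (u y - a).
have S_gt0 : 0 < S by rewrite /S; lra.
set mu := ((a - v y) + (u y - a)) / S.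
have muS : mu * S = (a - v y) + (u y - a) by rewrite /mu divfK ?gt_eqF.
have mu01 : 0 < mu < 1.
  by rewrite /mu ltr_pdivlMr // ltr_pdivrMr // mul0r mul1r /S; apply/andP; split; lra.
have combS p q : (mu * p + (1 - mu) * q - a) * S
    = ((a - v y) + (u y - a)) * (p - a) + ((a - u x) + (v x - a)) * (q - a).
  have -> : (mu * p + (1 - mu) * q - a) * S = mu * S * (p - a) + (S - mu * S) * (q - a).
    by ring.
  by rewrite muS /S; ring.
have below p q : ((a - v y) + (u y - a)) * (p - a) + ((a - u x) + (v x - a)) * (q - a) < 0 ->
    mu * p + (1 - mu) * q < a.
  by rewrite -combS pmulr_llt0 // subr_lt0.
have Cz := convex_set_mem convC Cx Cy mu01.
have := a_le_max _ Cz; rewrite le_max => /orP[] /le_trans.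
- move=> /(_ _ (convu x y mu Cx Cy mu01)); rewrite leNgt => /negP; apply; apply: below; nra.
- move=> /(_ _ (convv x y mu Cx Cy mu01)); rewrite leNgt => /negP; apply; apply: below; nra.
Qed.

Lemma convex_two_minimax :
  exists2 t, 0 <= t <= 1 & forall x, C x -> a <= t * u x + (1 - t) * v x.
Proof.
(* The admissible [t] at [x] are [t <= hi x] if [u x < a], [t >= lo x] if [v x < a], and all
   of [0, 1] otherwise; by [max_convex_cross] every [lo y] is below every [hi x], so the
   supremum of the [lo y] is admissible everywhere. *)
pose lo y := (a - v y) / ((u y - a) + (a - v y)).
pose hi x := (v x - a) / ((a - u x) + (v x - a)).
pose T := [set 0] `|` (lo @` [set y | C y /\ v y < a]).
have lo01 y : C y -> v y < a -> 0 <= lo y <= 1.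
  move=> Cy vya; have := a_le_u y Cy vya => auy.
  by rewrite divr_ge0 ?ler_pdivrMr /=; lra.
have T01 t : T t -> 0 <= t <= 1.
  by case=> [->|[y [Cy vya] <-]]; [rewrite lexx ler01|exact: lo01].
have T0 : T 0 by left.
have T_sup : has_sup T by split; [exists 0|exists 1 => t /T01; lra].
have T_le_sup t : T t -> t <= sup T by move=> Tt; apply: sup_upper_bound.
have sup01 : 0 <= sup T <= 1.
  by rewrite T_le_sup //=; apply: ge_sup => [|t /T01]; [exists 0|lra].
exists (sup T) => // x Cx.
have [uxa|aux] := ltP (u x) a.
  have avx := a_le_v x Cx uxa.
  have : sup T <= hi x.
    apply: ge_sup => [|_ [->|[y [Cy vya] <-]]]; first by exists 0.
      by rewrite divr_ge0 //; lra.
    have := max_convex_cross x y Cx Cy uxa vya; have := a_le_u y Cy vya => auy cross.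
    rewrite /lo /hi ler_pdivrMr; last lra.
    by rewrite mulrAC ler_pdivlMr; nra.
  by rewrite ler_pdivlMr; [nra|lra].
have [vxa|avx] := ltP (v x) a; last by nra.
have : lo x <= sup T by apply: T_le_sup; right; exists x.
by rewrite ler_pdivrMr; [nra|lra].
Qed.

End TwoConvexFunctions.

Lemma convex_onD {R : realType} {X : lmodType R} {C : set X} {u v : X -> R} :
  convex_on C u -> convex_on C v -> convex_on C (u \+ v).
Proof.
move=> cu cv x y t Cx Cy t01.
by have := cu x y t Cx Cy t01; have := cv x y t Cx Cy t01 => /=; lra.
Qed.

Lemma convex_onZ {R : realType} {X : lmodType R} {C : set X} {u : X -> R} {c : R} :
  0 <= c -> convex_on C u -> convex_on C (fun x => c * u x).
Proof.
move=> c0 cu x y t Cx Cy t01.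
have -> : t * (c * u x) + (1 - t) * (c * u y) = c * (t * u x + (1 - t) * u y) by ring.
exact/ler_wpM2l/cu.
Qed.

Section GreedyWeights.
Variables (R : realType) (X : lmodType R) (C : set X) (phi gam : nat -> X -> R) (a : R).
Hypotheses (convC : convex_set C) (convphi : forall k, convex_on C (phi k))
  (convgam : forall n, convex_on C (gam n)).
Hypothesis gam_le_max : forall n x, C x -> gam n x <= Num.max (phi n x) (gam n.+1 x).
Hypothesis a_le_gam0 : forall x, C x -> a <= gam 0 x.

Let greedy_inv n (P : X -> R) (s : R) :=
  [/\ convex_on C P, s <= 1 & forall x, C x -> a <= P x + (1 - s) * gam n x].

Let next_weight n (P : X -> R) (s l : R) :=
  0 <= l <= 1 - s /\ forall x, C x -> a <= P x + l * phi n x + (1 - (s + l)) * gam n.+1 x.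

Let next_weight_exists n P s : greedy_inv n P s -> exists l, next_weight n P s l.
Proof.
case=> convP s1 aP.
have convD (w : X -> R) : convex_on C w -> convex_on C (fun x => P x + (1 - s) * w x).
  by move=> cw; apply: convex_onD => //; apply: convex_onZ; rewrite // subr_ge0.
have [|t t01 ht] :=
  @convex_two_minimax _ _ C _ _ a convC (convD _ (convphi n)) (convD _ (convgam n.+1)).
  move=> x Cx; have := aP x Cx; have := gam_le_max n x Cx.
  have s0 : 0 <= 1 - s by rewrite subr_ge0.
  by rewrite !le_max => /orP[] le_gam aPx; apply/orP; [left|right]; nra.
exists ((1 - s) * t); split; first by apply/andP; split; nra.
by move=> x Cx; have := ht x Cx; nra.
Qed.

Let weight n P s := xget 0 (next_weight n P s).

Let weightP n P s : greedy_inv n P s -> next_weight n P s (weight n P s).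
Proof. by move=> /next_weight_exists /(xgetPex 0). Qed.

Let Fixpoint state n : (X -> R) * R :=
  if n is n'.+1 then
    let: (P, s) := state n' in
    ((fun x => P x + weight n' P s * phi n' x), s + weight n' P s)
  else (fun _ => 0, 0).

Let lam n := weight n (state n).1 (state n).2.

Let state_inv n : greedy_inv n (state n).1 (state n).2.
Proof.
elim: n => [|n IH].
  split=> [x y t _ _ _|//|x Cx]; first by lra.
  by rewrite add0r subr0 mul1r a_le_gam0.
have [/andP[l0 l1] al] := weightP _ _ _ IH.
case: IH => convP s1 _; rewrite /= [state n]surjective_pairing /=.
split=> [|//|x Cx]; last exact: al.
  exact: convex_onD convP (convex_onZ l0 (convphi n)).
by move: l1; lra.
Qed.

Let lam_next n : next_weight n (state n).1 (state n).2 (lam n).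
Proof. exact: weightP _ _ _ (state_inv n). Qed.

Let stateE n :
  (state n).2 = series lam n /\ forall x, (state n).1 x = \sum_(0 <= k < n) lam k * phi k x.
Proof.
elim: n => [|n [IH2 IH1]]; first by rewrite /series /= big_nil; split=> // x; rewrite big_nil.
rewrite /= [state n]surjective_pairing /= seriesSr -IH2.
by split=> // x; rewrite big_nat_recr //= IH1.
Qed.

Lemma greedy_weights : exists lam : nat -> R,
  [/\ forall n, 0 <= lam n, forall n, series lam n <= 1 &
      forall n x, C x -> a <= \sum_(0 <= k < n) lam k * phi k x + (1 - series lam n) * gam n x].
Proof.
exists lam; split=> [n|n|n x Cx]; have [s_eq P_eq] := stateE n.
- by have [/andP[]] := lam_next n.
- by have [_ +] := state_inv n; rewrite s_eq.
- by have [_ _] := state_inv n; rewrite s_eq -P_eq; apply.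
Qed.

End GreedyWeights.

Local Open Scope ereal_scope.

Lemma cadd_yl {R : realType} (b : \bar R) : Defs.cadd +oo b = +oo.
Proof. by []. Qed.

Lemma cadd_yr {R : realType} (a : \bar R) : Defs.cadd a +oo = +oo.
Proof. by rewrite /Defs.cadd orbT. Qed.

Lemma caddE {R : realType} (a b : \bar R) : a != +oo -> b != +oo -> Defs.cadd a b = a + b.
Proof. by rewrite /Defs.cadd => /negbTE -> /negbTE ->. Qed.

Lemma cmul_y {R : realType} (l : R) : Defs.cmul l +oo = +oo.
Proof. by []. Qed.

Lemma cmulE {R : realType} (l : R) (a : \bar R) : a != +oo -> Defs.cmul l a = l%:E * a.
Proof. by rewrite /Defs.cmul => /negbTE ->. Qed.

Lemma le_limn_esup {R : realType} {u v : (\bar R)^nat} (N : nat) :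
  (forall n, (N <= n)%N -> u n <= v n) -> limn_esup u <= limn_esup v.
Proof.
move=> uv; rewrite !limn_esup_lim; apply: lee_lim; [exact: is_cvg_esups..|].
near=> n; apply: ge_ereal_sup => _ [k /= nk <-].
apply: le_trans (uv k _) _; last by apply: ereal_sup_ubound; exists k.
by apply: leq_trans nk; near: n; exists N.
Unshelve. all: by end_near. Qed.

Lemma limn_esup_EFin {R : realType} {b : R^nat} {l : R} :
  b @ \oo --> l -> limn_esup (EFin \o b) = l%:E.
Proof. by move=> bl; apply: (cvg_limn_einf_sup _).2; apply: cvg_EFin => //; apply: nearW. Qed.

Lemma limn_esup_cst {R : realType} (c : \bar R) : limn_esup (fun _ : nat => c) = c.
Proof. exact: (cvg_limn_einf_sup (cvg_cst c)).2. Qed.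

Lemma esups0 {R : realType} (u : (\bar R)^nat) : esups u 0%N = ereal_sup (range u).
Proof. by rewrite /esups /=; congr ereal_sup; apply/seteqP; split=> _ [k _ <-]; exists k. Qed.

Lemma esupsS {R : realType} (u : (\bar R)^nat) n : esups u n = maxe (u n) (esups u n.+1).
Proof.
apply/eqP; rewrite eq_le ge_max; apply/and3P; split.
- apply: ge_ereal_sup => _ [k /= + <-]; rewrite leq_eqVlt => /orP[/eqP <-|nk].
    by rewrite le_max lexx.
  by rewrite le_max; apply/orP; right; apply: ereal_sup_ubound; exists k.
- by apply: ereal_sup_ubound; exists n => /=.
- by apply: ereal_sup_le => _ [k /= nk <-]; exists k => //; apply: ltnW.
Qed.

Lemma le_EFin_neqy {R : realType} (y : \bar R) (r : R) : y <= r%:E -> y != +oo.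
Proof. by move=> yr; rewrite -ltey (le_lt_trans yr) ?ltey. Qed.

Lemma weighted_valueEFin {R : realType} {X : Type} {f : nat -> X -> \bar R}
    {l : nat -> R} {linf : R} {x : X} {c : R^nat} :
  (forall k, f k x = (c k)%:E) ->
  weighted_value f l linf x =
  Defs.cadd (limn_esup (fun n => (\sum_(0 <= k < n) l k * c k)%R%:E))
            (Defs.cmul linf (limn_esup (EFin \o c))).
Proof.
move=> fc; rewrite /weighted_value; congr Defs.cadd.
  by congr limn_esup; apply/funext=> n; rewrite -sumEFin; apply: eq_bigr => k _; rewrite fc.
by congr (Defs.cmul _ (limn_esup _)); apply/funext => k; rewrite fc.
Qed.

Lemma weighted_sum_le {R : realType} (c l : R^nat) (linf M : R) :
  admissible l linf -> (forall k, c k <= M)%R ->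
  Defs.cadd (limn_esup (fun n => (\sum_(0 <= k < n) l k * c k)%R%:E))
            (Defs.cmul linf (limn_esup (EFin \o c))) <= M%:E.
Proof.
move=> [l0 [cl [linf0 sum1]]] cM.
have partial_le : limn_esup (fun n => (\sum_(0 <= k < n) l k * c k)%R%:E)
    <= (limn (series l) * M)%:E.
  rewrite -(limn_esup_EFin (cvgMr_tmp (b := M) cl)).
  apply: (le_limn_esup 0) => n _; rewrite lee_fin /series /= mulr_suml.
  by apply: ler_sum => k _; apply: ler_wpM2l.
have csup_le : limn_esup (EFin \o c) <= M%:E.
  by rewrite -[leRHS]limn_esup_cst; apply: (le_limn_esup 0) => n _; rewrite lee_fin.
have scaled_le : linf%:E * limn_esup (EFin \o c) <= (linf * M)%:E.
  by rewrite EFinM; apply: lee_wpmul2l; rewrite ?lee_fin.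
rewrite cmulE; last exact: le_EFin_neqy csup_le.
rewrite caddE; [|exact: le_EFin_neqy partial_le|exact: le_EFin_neqy scaled_le].
apply: le_trans (leeD partial_le scaled_le) _.
by rewrite -EFinD -mulrDl sum1 mul1r.
Qed.

Lemma weighted_value_le_sup {R : realType} {X : Type} {f : nat -> X -> \bar R}
    {l : nat -> R} {linf : R} {x : X} :
  (forall k, f k x != -oo) -> admissible l linf ->
  weighted_value f l linf x <= ereal_sup (range (fun k => f k x)).
Proof.
move=> fNy adm; set F := ereal_sup _.
have [->|Fny] := eqVneq F +oo; first by rewrite leey.
have fF k : f k x <= F by apply: ereal_sup_ubound; exists k.
have Ffin : F \is a fin_num.
  by rewrite fin_numE Fny andbT; apply: contra (fNy 0%N) => /eqP F0; rewrite -leeNy_eq -F0.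
have ffin k : f k x \is a fin_num.
  by rewrite fin_numE fNy (@le_EFin_neqy _ _ (fine F)) // fineK.
rewrite -(fineK Ffin) (weighted_valueEFin (c := fun k => fine (f k x))) => [|k]; last first.
  by rewrite fineK.
by apply: weighted_sum_le => // k; rewrite -lee_fin !fineK.
Qed.

Lemma limn_esup_ge_greedy {R : realType} (S G m : R^nat) (a linf : R) (N : nat) :
  nonincreasing_seq G -> m @ \oo --> linf -> (forall n, linf <= m n)%R ->
  (0 <= linf)%R -> (forall n, a <= S n + m n * G n)%R ->
  (a - linf * G N)%:E <= limn_esup (EFin \o S).
Proof.
move=> Gdec mlim mge linf0 aS.
pose w n := (a - linf * G N - (m n - linf) * `|G 0%N|)%R.
have wlim : w @ \oo --> (a - linf * G N)%R.
  have : (fun n => (m n - linf) * `|G 0%N|)%R @ \oo --> 0%R.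
    rewrite -(mul0r `|G 0%N|%R); apply: cvgMr_tmp.
    by rewrite -(subrr linf); apply: cvgB => //; exact: cvg_cst.
  by move=> /(cvgB (cvg_cst (a - linf * G N)%R)); rewrite subr0.
rewrite -(limn_esup_EFin wlim); apply: (le_limn_esup N) => n Nn; rewrite lee_fin /w.
have GnN : (G n <= G N)%R := Gdec _ _ Nn.
have Gn0 : (G n <= `|G 0%N|)%R := le_trans (Gdec _ _ (leq0n n)) (ler_norm _).
by have := aS n; have := mge n; nra.
Qed.

Lemma le_cadd_cmul_limn {R : realType} {L : \bar R} {G : R^nat} {a linf : R} :
  nonincreasing_seq G -> (0 <= linf)%R -> (forall N, (a - linf * G N)%:E <= L) ->
  a%:E <= Defs.cadd L (Defs.cmul linf (limn (EFin \o G))).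
Proof.
move=> Gdec linf0 aL.
have [->|Lny] := eqVneq L +oo; first by rewrite cadd_yl leey.
have Lfin : L \is a fin_num.
  by rewrite fin_numE Lny andbT; apply: contraTneq (aL 0%N) => ->; rewrite leeNy_eq.
have EGdec : nonincreasing_seq (EFin \o G) by move=> p q pq; rewrite lee_fin Gdec.
have Gcvg := ereal_nonincreasing_is_cvgn EGdec.
have Glim_le : limn (EFin \o G) <= (G 0%N)%:E.
  by apply: lime_le => //; apply: nearW => n; rewrite lee_fin Gdec.
have scaled_le : linf%:E * limn (EFin \o G) <= (linf * G 0%N)%:E.
  by rewrite EFinM; apply: lee_wpmul2l; rewrite ?lee_fin.
rewrite cmulE; last exact: le_EFin_neqy Glim_le.
rewrite caddE //; last exact: le_EFin_neqy scaled_le.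
move: aL; rewrite -(fineK Lfin); set l := fine L => aL.
have [linf_eq0|linf_neq0] := eqVneq linf 0%R.
  by rewrite linf_eq0 mul0e adde0; have := aL 0%N; rewrite linf_eq0 mul0r subr0.
have linf_pos : (0 < linf)%R by rewrite lt_neqAle eq_sym linf_neq0.
have Glim_ge : ((a - l) / linf)%:E <= limn (EFin \o G).
  apply: lime_ge => //; apply: nearW => N; rewrite /= lee_fin ler_pdivrMr //.
  by have := aL N; rewrite lee_fin mulrC; lra.
have : (0 <= linf%:E) by rewrite lee_fin.
move=> /lee_wpmul2l /(_ _ _ Glim_ge); rewrite -EFinM mulrC divfK ?gt_eqF // => /(leeD2l l%:E).
by apply: le_trans; rewrite -EFinD addrC subrK.
Qed.

Lemma cmul_neqNy {R : realType} (l : R) (a : \bar R) : a != -oo -> Defs.cmul l a != -oo.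
Proof. by rewrite /Defs.cmul; case: a. Qed.

Lemma weighted_value_termy {R : realType} {X : Type} {f : nat -> X -> \bar R}
    {l : nat -> R} {linf : R} {x : X} {k : nat} :
  (forall k, f k x != -oo) -> f k x = +oo -> weighted_value f l linf x = +oo.
Proof.
move=> fNy fky; rewrite /weighted_value.
suff -> : limn_esup (fun n => \sum_(0 <= i < n) Defs.cmul (l i) (f i x)) = +oo by [].
apply/eqP; rewrite eq_le leey /= -[leLHS](limn_esup_cst +oo).
apply: (le_limn_esup k.+1) => n kn; rewrite leye_eq; apply/eqP/esum_eqyP.
  by move=> i _; apply: cmul_neqNy.
by exists k; rewrite mem_index_iota kn /Defs.cmul fky.
Qed.

Lemma esups_eqy {R : realType} (u : (\bar R)^nat) :
  (forall k, u k \is a fin_num) -> ereal_sup (range u) = +oo -> forall n, esups u n = +oo.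
Proof.
move=> ufin uy; elim=> [|n IH]; first by rewrite esups0.
move: IH; rewrite esupsS; have [//|_ uny] := leP (u n) (esups u n.+1).
by have := ufin n; rewrite uny.
Qed.

Lemma weighted_value_supy {R : realType} {X : Type} {f : nat -> X -> \bar R}
    {l : nat -> R} {linf : R} {x : X} :
  (forall k, f k x \is a fin_num) -> ereal_sup (range (fun k => f k x)) = +oo ->
  weighted_value f l linf x = +oo.
Proof.
move=> ffin Fy; rewrite /weighted_value (limn_esup_lim (fun k => f k x)).
by rewrite (_ : esups _ = cst +oo) ?lim_cst ?cmul_y ?cadd_yr //; apply/funext=> n; apply: esups_eqy.
Qed.

Lemma series_le1_cvg {R : realType} {lam : R^nat} :
  (forall n, 0 <= lam n)%R -> (forall n, series lam n <= 1)%R ->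
  [/\ cvgn (series lam), (forall n, series lam n <= limn (series lam))%R
    & (limn (series lam) <= 1)%R].
Proof.
move=> lam0 lam1.
have sinc : nondecreasing_seq (series lam).
  by apply/nondecreasing_seqP => n; rewrite seriesSr lerDl.
have scvg : cvgn (series lam) by apply: nondecreasing_is_cvgn => //; exists 1%R => _ [n _ <-].
by split=> //; [exact: nondecreasing_cvgn_le|apply: limr_le => //; exact: nearW].
Qed.

Lemma admissible_series {R : realType} (lam : R^nat) :
  (forall n, 0 <= lam n)%R -> (forall n, series lam n <= 1)%R ->
  admissible lam (1 - limn (series lam)).
Proof.
move=> lam0 lam1; have [scvg _ slim] := series_le1_cvg lam0 lam1.
by split=> //; split=> //; rewrite subr_ge0 addrC subrK.
Qed.

Lemma admissible_infty {R : realType} : admissible (fun _ : nat => 0%R) (1%R : R).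
Proof.
have s0 : series (fun _ : nat => 0%R : R) = cst 0%R by apply/funext => n; rewrite /series /= big1.
by split=> //; rewrite s0; split; [exact: is_cvg_cst|rewrite lim_cst // add0r].
Qed.

Lemma esups_fin_num {R : realType} {u : (\bar R)^nat} :
  (forall k, u k != -oo) -> ereal_sup (range u) \is a fin_num ->
  forall n, esups u n \is a fin_num.
Proof.
move=> uNy ufin n; rewrite fin_numE; apply/andP; split.
  apply: contra (uNy n) => /eqP unNy; rewrite -leeNy_eq -unNy.
  by apply: ereal_sup_ubound; exists n => /=.
apply: (@le_EFin_neqy _ _ (fine (ereal_sup (range u)))); rewrite fineK // -esups0.
exact: nonincreasing_esups.
Qed.

Lemma weighted_value_ge_greedy {R : realType} {X : Type} {f : nat -> X -> \bar R}
    {lam : nat -> R} {a : R} {x : X} :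
  (forall k, f k x \is a fin_num) -> ereal_sup (range (fun k => f k x)) \is a fin_num ->
  (forall n, 0 <= lam n)%R -> (forall n, series lam n <= 1)%R ->
  (forall n, a <= \sum_(0 <= k < n) lam k * fine (f k x)
                  + (1 - series lam n) * fine (esups (fun k => f k x) n))%R ->
  a%:E <= weighted_value f lam (1 - limn (series lam)) x.
Proof.
move=> ffin Ffin lam0 lam1 greedy.
have [scvg sle slim] := series_le1_cvg lam0 lam1.
pose u k := f k x.
have uNy k : u k != -oo by have /fin_numP[] := ffin k.
have esfin := esups_fin_num uNy Ffin.
pose G n := fine (esups u n).
have Gdec : nonincreasing_seq G.
  by move=> p q pq; rewrite -lee_fin !fineK //; apply: nonincreasing_esups.
rewrite (weighted_valueEFin (c := fun k => fine (u k))) => [|k]; last by rewrite fineK ?ffin.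
have -> : EFin \o (fun k => fine (u k)) = u by apply/funext => k /=; rewrite fineK ?ffin.
have -> : limn_esup u = limn (EFin \o G).
  by rewrite limn_esup_lim; congr (limn _); apply/funext => n /=; rewrite fineK ?esfin.
apply: (le_cadd_cmul_limn Gdec) => [|N]; first by rewrite subr_ge0.
apply: (@limn_esup_ge_greedy _ _ G (fun n => 1 - series lam n)%R) => //.
- by apply: cvgB => //; exact: cvg_cst.
- by move=> n; rewrite lerB.
- by rewrite subr_ge0.
Qed.

Lemma convex_fun_sup {R : realType} {X : lmodType R} {f : nat -> X -> \bar R} {K : set nat} :
  (forall k, convex_fun (f k)) -> convex_fun (fun x => ereal_sup [set f k x | k in K]).
Proof.
move=> fconv x y t t01; apply: ge_ereal_sup => _ [k Kk <-].
have t0 : (0 <= t)%R by case/andP: t01 => /ltW.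
have t1 : (0 <= 1 - t)%R by case/andP: t01 => _ /ltW; rewrite subr_ge0.
apply: le_trans (fconv k x y t t01) _.
by apply: leeD; apply: lee_wpmul2l; rewrite ?lee_fin //; apply: ereal_sup_ubound; exists k.
Qed.

Lemma convex_on_fine {R : realType} {X : lmodType R} (C : set X) (g : X -> \bar R) :
  convex_set C -> convex_fun g -> (forall x, C x -> g x \is a fin_num) ->
  convex_on C (fun x => fine (g x)).
Proof.
move=> convC convg gfin x y t Cx Cy t01.
by rewrite -lee_fin EFinD !EFinM !fineK ?gfin //; [exact: convg|exact: convex_set_mem].
Qed.

Section SupOfConvex.
Variables (R : realType) (X : lmodType R) (f : nat -> X -> \bar R).
Hypotheses (fNy : forall k x, f k x != -oo) (fconv : forall k, convex_fun (f k)).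

Local Notation F x := (ereal_sup (range (fun k => f k x))).

Let dom := [set x | F x != +oo].

Let dom_fin_num {x : X} : dom x ->
  [/\ forall k, f k x \is a fin_num, F x \is a fin_num
    & forall n, esups (fun k => f k x) n \is a fin_num].
Proof.
move=> domx; have Ffin : F x \is a fin_num.
  rewrite fin_numE domx andbT; apply: contra (fNy 0 x) => /eqP F0.
  by rewrite -leeNy_eq -F0; apply: ereal_sup_ubound; exists 0%N.
split=> // [k|]; last exact: esups_fin_num.
rewrite fin_numE fNy (@le_EFin_neqy _ _ (fine (F x))) // fineK //.
by apply: ereal_sup_ubound; exists k.
Qed.

Let convex_dom : convex_set dom.
Proof.
apply/convex_setW => x y; rewrite !inE => domx domy t t0 t1; rewrite inE /dom /=.
have [_ Fx _] := dom_fin_num domx; have [_ Fy _] := dom_fin_num domy.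
have t01 : (0 < t%:num < 1)%R by rewrite t0 t1.
have := convex_fun_sup (K := setT) fconv x y t%:num t01.
by rewrite -(fineK Fx) -(fineK Fy) -!EFinM -EFinD => /le_EFin_neqy.
Qed.

Let phi k x := fine (f k x).
Let gam n x := fine (esups (fun k => f k x) n).

Lemma admissible_weights_ge (a : R) : (forall x, a%:E <= F x) ->
  exists lam, admissible lam (1 - limn (series lam))
    /\ forall x, a%:E <= weighted_value f lam (1 - limn (series lam)) x.
Proof.
move=> aF.
have convphi k : convex_on dom (phi k).
  by apply: convex_on_fine convex_dom (fconv k) _ => x /dom_fin_num[+ _ _]; apply.
have convgam n : convex_on dom (gam n).
  by apply: convex_on_fine convex_dom (convex_fun_sup fconv) _ => x /dom_fin_num[_ _]; apply.
have gam_le_max n x : dom x -> (gam n x <= Num.max (phi n x) (gam n.+1 x))%R.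
  case/dom_fin_num => ffin _ esfin.
  by rewrite -lee_fin EFin_max /gam /phi !fineK // -esupsS.
have a_le_gam0 x : dom x -> (a <= gam 0 x)%R.
  by case/dom_fin_num => _ _ esfin; rewrite -lee_fin /gam fineK // esups0.
have [lam [lam0 lam1 greedy]] :=
  @greedy_weights _ _ dom phi gam a convex_dom convphi convgam gam_le_max a_le_gam0.
exists lam; split=> [|x]; first exact: admissible_series.
have [[k fky]|fnyy] := pselect (exists k, f k x = +oo).
  by rewrite (weighted_value_termy (fNy^~ x) fky) leey.
have ffin k : f k x \is a fin_num.
  by rewrite fin_numE fNy; apply/eqP => fky; apply: fnyy; exists k.
have [Fy|Fny] := eqVneq (F x) +oo.
  by rewrite (weighted_value_supy ffin Fy) leey.
have [_ Ffin _] := dom_fin_num Fny.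
exact: weighted_value_ge_greedy ffin Ffin lam0 lam1 (fun n => greedy n x Fny).
Qed.

End SupOfConvex.

Theorem proposition3p2 (R : realType) (X : completeNormedModType R)
  (f : nat -> X -> \bar R) :
  (forall k, proper_fun (f k)) ->
  (forall k, convex_fun (f k)) ->
  proper_fun (fun x => ereal_sup (range (fun k => f k x))) ->
  exists (l : nat -> R) (linf : R),
    [/\ admissible l linf,
        ereal_inf (range (weighted_value f l linf))
          = ereal_inf (range (fun x => ereal_sup (range (fun k => f k x))))
      & forall (l' : nat -> R) (linf' : R), admissible l' linf' ->
          ereal_inf (range (weighted_value f l' linf'))
            <= ereal_inf (range (fun x => ereal_sup (range (fun k => f k x))))].
Proof.
move=> fprop fconv [_ [x0 Fx0]].
have fNy k x : f k x != -oo by case: (fprop k) => + _; apply.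
set alpha := ereal_inf _.
have inf_le l linf : admissible l linf -> ereal_inf (range (weighted_value f l linf)) <= alpha.
  move=> adm; apply: le_ereal_inf_tmp => _ [x _ <-]; apply: ge_ereal_inf.
  by exists (weighted_value f l linf x); [exists x|exact: weighted_value_le_sup].
suff [l [linf [adm ge_alpha]]] : exists l linf, admissible l linf
    /\ alpha <= ereal_inf (range (weighted_value f l linf)).
  by exists l, linf; split=> //; apply/eqP; rewrite eq_le ge_alpha inf_le.
have [->|alpha_neqNy] := eqVneq alpha -oo.
  by exists (fun _ => 0%R), 1%R; rewrite leNye; split=> //; exact: admissible_infty.
have alpha_fin : alpha \is a fin_num.
  rewrite fin_numE alpha_neqNy; apply: contra Fx0 => /eqP alpha_y.
  by rewrite -leye_eq -alpha_y; apply: ereal_inf_lbound; exists x0.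
have alpha_le x : (fine alpha)%:E <= ereal_sup (range (fun k => f k x)).
  by rewrite fineK //; apply: ereal_inf_lbound; exists x.
have [lam [adm ge_alpha]] := @admissible_weights_ge _ _ f fNy fconv (fine alpha) alpha_le.
exists lam, (1 - limn (series lam))%R; split=> //.
by rewrite -(fineK alpha_fin); apply: le_ereal_inf_tmp => _ [x _ <-]; exact: ge_alpha.
Qed.
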